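(* Let $\mathcal{F}$ be the star-shaped frame described below, let $d_i$ be a domain, and let $p$ be a $d_i$-purge function. If $\mathcal{F}$ is $p$-noninterfering ($\mathcal{F}\in\mathrm{NI}^p$), then $\mathcal{F}$ is $p$-nondeducible ($\mathcal{F}\in\mathrm{ND}^p$).
   Context: Frames and executions: a frame has locations, channels (each with a sender and recipient location) and data values; each location $\ell$ has a prefix-closed set $\mathrm{traces}(\ell)$ of finite or infinite sequences of labels (channel, data) over channels incident to $\ell$. Events come from a set $E$ with functions $\mathrm{chan}$, $\mathrm{msg}$; a system of events $(B,\preceq)$ ($B\subseteq E$, $\preceq$ a partial order with finitely many predecessors per event) is an execution ($\in\mathrm{exec}(\mathcal{F})$) iff for each location the events on its incident channels are linearly ordered and, as a label sequence, belong to its trace set. $\mathcal{A}|_C$ keeps the events whose channel is in $C$, with the restricted order. $J_C^{C'}(\mathcal{B})=\{\mathcal{A}|_{C'}:\mathcal{A}\in\mathrm{exec}(\mathcal{F}),\ \mathcal{A}|_C=\mathcal{B}\}$. Setting: a finite set of domains $\{d_1,\dots,d_k\}$ with a reflexive relation $\hookrightarrow$ on it; $\mathcal{F}$ has locations $d_1,\dots,d_k,M$ and channels $c_j^{\mathrm{in}}$ (sender $d_j$, recipient $M$) and $c_j^{\mathrm{out}}$ (sender $M$, recipient $d_j$), $1\le j\le k$, with given trace sets (e.g. induced by a possibly nondeterministic state machine at $M$). Let $C_i=\{c_i^{\mathrm{in}},c_i^{\mathrm{out}}\}$, $\mathrm{vis}(d_i)=\{c_j^{\mathrm{in}}:d_j\hookrightarrow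 d_i\}$, $\mathsf{IN}=\{c_j^{\mathrm{in}}:1\le j\le k\}$, $\mathrm{inp}(\mathcal{A})=\mathcal{A}|_{\mathsf{IN}}$. A $d_i$-purge function is a function $p$ from $\mathrm{exec}(\mathcal{F})$ to some set such that (1) $\mathrm{inp}(\mathcal{A})=\mathrm{inp}(\mathcal{A}')$ implies $p(\mathcal{A})=p(\mathcal{A}')$, and (2) $p(\mathcal{A})=p(\mathcal{A}')$ implies $\mathcal{A}|_{\mathrm{vis}(d_i)}=\mathcal{A}'|_{\mathrm{vis}(d_i)}$. $\mathcal{F}\in\mathrm{NI}^p$ iff for all $\mathcal{A},\mathcal{A}'\in\mathrm{exec}(\mathcal{F})$, $p(\mathcal{A})=p(\mathcal{A}')$ implies $\mathcal{A}|_{C_i}=\mathcal{A}'|_{C_i}$. $\mathcal{F}\in\mathrm{ND}^p$ iff for all $\mathcal{A},\mathcal{A}'\in\mathrm{exec}(\mathcal{F})$, $p(\mathcal{A})=p(\mathcal{A}')$ implies $\mathcal{A}'|_{\mathsf{IN}}\in J_{C_i}^{\mathsf{IN}}(\mathcal{A}|_{C_i})$. *)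

From mathcomp Require Import all_boot.
From Stdlib Require Import List.
Set Implicit Arguments. Unset Strict Implicit. Unset Printing Implicit Defensive.

(* Domains d_1..d_k are the ordinals 'I_k; the extra location M is [Mon]. *)
Inductive loc (k : nat) : Type := Dom of 'I_k | Mon.
Arguments Mon {k}.

(* channel (j, In) = c_j^in (d_j -> M), channel (j, Out) = c_j^out (M -> d_j) *)
Inductive dir : Type := In | Out.
Definition chan (k : nat) : Type := ('I_k * dir)%type.

Definition sender k (c : chan k) : loc k :=
  match c.2 with In => Dom c.1 | Out => Mon end.
Definition recipient k (c : chan k) : loc k :=
  match c.2 with In => Mon | Out => Dom c.1 end.
Definition incident k (l : loc k) (c : chan k) : Prop :=
  sender c = l \/ recipient c = l.

Definition label k (Data : Type) : Type := (chan k * Data)%type.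

(* A finite or infinite sequence of labels: a partial map on nat which,
   once undefined, stays undefined (finite sequences = eventually None). *)
Definition trace (L : Type) : Type := nat -> option L.
Definition is_seq L (t : trace L) : Prop := forall n, t n = None -> t n.+1 = None.
Definition truncate L (t : trace L) (n : nat) : trace L :=
  fun m => if m < n then t m else None.

Record star_frame (k : nat) (Data : Type) :=
  StarFrame { traces : loc k -> trace (label k Data) -> Prop }.

Definition frame_ok k Data (F : star_frame k Data) : Prop :=
  forall l t, traces F l t ->
    is_seq t
    /\ (forall n c d, t n = Some (c, d) -> incident l c)
    /\ (forall n, traces F l (truncate t n)).

Record sys (E : Type) := Sys { ev : E -> Prop; ord : E -> E -> Prop }.

Definition sys_wf E (A : sys E) : Prop :=
  (forall x y, ord A x y -> ev A x /\ ev A y)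
  /\ (forall x, ev A x -> ord A x x)
  /\ (forall x y, ord A x y -> ord A y x -> x = y)
  /\ (forall x y z, ord A x y -> ord A y z -> ord A x z)
  /\ (forall x, ev A x -> exists s : list E, forall y, ord A y x -> List.In y s).

Definition sys_eq E (A A' : sys E) : Prop :=
  (forall e, ev A e <-> ev A' e) /\ (forall x y, ord A x y <-> ord A' x y).

Section Events.
Variables (k : nat) (Data E : Type) (ch : E -> chan k) (msg : E -> Data).

Definition restrict (C : chan k -> Prop) (A : sys E) : sys E :=
  Sys (fun e => ev A e /\ C (ch e))
      (fun x y => ord A x y /\ ev A x /\ ev A y /\ C (ch x) /\ C (ch y)).

(* t is the label sequence of the events of A at location l, which are
   linearly ordered (enumerated in order by an initial segment of nat). *)
Definition local_seq (l : loc k) (A : sys E) (t : trace (label k Data)) : Prop :=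
  exists en : nat -> option E,
    (forall n, en n = None -> en n.+1 = None)
    /\ (forall n x, en n = Some x -> ev A x /\ incident l (ch x))
    /\ (forall x, ev A x -> incident l (ch x) -> exists n, en n = Some x)
    /\ (forall n m x y, en n = Some x -> en m = Some y -> (ord A x y <-> n <= m))
    /\ (forall n, t n = omap (fun x => (ch x, msg x)) (en n)).

Definition is_exec (F : star_frame k Data) (A : sys E) : Prop :=
  sys_wf A /\ forall l, exists t, local_seq l A t /\ traces F l t.

Definition Cdom (i : 'I_k) : chan k -> Prop := fun c => c.1 = i.
Definition vis (hook : rel 'I_k) (i : 'I_k) : chan k -> Prop :=
  fun c => c.2 = In /\ hook c.1 i.
Definition INchans : chan k -> Prop := fun c => c.2 = In.
Definition inp (A : sys E) : sys E := restrict INchans A.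

Definition inJ (F : star_frame k Data) (C C' : chan k -> Prop) (B B' : sys E) : Prop :=
  exists A, is_exec F A /\ sys_eq (restrict C A) B /\ sys_eq (restrict C' A) B'.

Definition purge_fun (F : star_frame k Data) (hook : rel 'I_k) (i : 'I_k)
    (T : Type) (p : sys E -> T) : Prop :=
  (forall A A', is_exec F A -> is_exec F A' ->
     sys_eq (inp A) (inp A') -> p A = p A')
  /\ (forall A A', is_exec F A -> is_exec F A' -> p A = p A' ->
     sys_eq (restrict (vis hook i) A) (restrict (vis hook i) A')).

Definition NI (F : star_frame k Data) (i : 'I_k) (T : Type) (p : sys E -> T) : Prop :=
  forall A A', is_exec F A -> is_exec F A' -> p A = p A' ->
    sys_eq (restrict (Cdom i) A) (restrict (Cdom i) A').

Definition ND (F : star_frame k Data) (i : 'I_k) (T : Type) (p : sys E -> T) : Prop :=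
  forall A A', is_exec F A -> is_exec F A' -> p A = p A' ->
    inJ F (Cdom i) INchans (restrict (Cdom i) A) (restrict INchans A').

End Events.

From mathcomp Require Import all_boot.

(* The execution A' itself witnesses nondeducibility: noninterference makes
   it agree with A on the channels of d_i, and it trivially agrees with
   itself on the input channels. *)

Lemma sys_eq_refl (E : Type) (A : sys E) : sys_eq A A.
Proof. by split. Qed.

Lemma sys_eq_sym (E : Type) (A B : sys E) : sys_eq A B -> sys_eq B A.
Proof. by move=> [evAB ordAB]; split=> [e | x y]; rewrite ?evAB ?ordAB. Qed.

Lemma inJ_restrict_exec (k : nat) (Data E : Type) (ch : E -> chan k)
    (msg : E -> Data) (F : star_frame k Data) (C C' : chan k -> Prop)
    (A : sys E) (B : sys E) :
  is_exec ch msg F A -> sys_eq (restrict ch C A) B ->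
  inJ ch msg F C C' B (restrict ch C' A).
Proof. by move=> execA eqB; exists A; split; [|split; [|exact: sys_eq_refl]]. Qed.

Theorem lemma9 (k : nat) (Data E : Type) (ch : E -> chan k) (msg : E -> Data)
    (F : star_frame k Data) (hF : frame_ok F)
    (hook : rel 'I_k) (hook_refl : reflexive hook)
    (i : 'I_k) (T : Type) (p : sys E -> T)
    (hp : purge_fun ch msg F hook i p) :
  NI ch msg F i p -> ND ch msg F i p.
Proof.
move=> hNI A A' execA execA' samePurge.
apply: inJ_restrict_exec => //.
exact/sys_eq_sym/hNI.
Qed.
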